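(* Let the premiums $\{X_n, n\geq 1\}$, the claims $\{Y_n, n\geq 1\}$ and the rates of interest $\{I_n, n\geq 1\}$ be mutually independent sequences of nonnegative i.i.d. random variables with finite expectations. For $u\geq 0$ define $U_0=u$, $U_n=(U_{n-1}+X_n)(1+I_n)-Y_n$ for $n\geq 1$, and $\Psi(u)=\mathbb{P}\big(\bigcup_{n=1}^\infty\{U_n<0\}\big)$. Let $$S_n=\sum_{i=1}^n\Big(\big(Y_i(1+I_i)^{-1}-X_i\big)\prod_{j=1}^{i-1}(1+I_j)^{-1}\Big),\quad n\geq 1,$$ with the empty product equal to $1$. If there exists a positive real number $R$ satisfying $$\mathbb{E}\Big(e^{R\left(Y_1(1+I_1)^{-1}-X_1\right)}\Big)\leq 1,$$ then $\{Z_n=e^{RS_n}, n\geq 1\}$ is a supermartingale (i.e. $\mathbb{E}(Z_{n+1}\mid Z_1,\dots,Z_n)\leq Z_n$ a.s. for all $n$), and $\Psi(u)\leq e^{-Ru}$ for all $u>0$. *)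

From HB Require Import structures.
From mathcomp Require Import all_boot all_order all_algebra.
From mathcomp Require Import all_classical all_reals all_analysis.
Set Implicit Arguments. Unset Strict Implicit. Unset Printing Implicit Defensive.
Import Order.TTheory GRing.Theory Num.Theory.
Local Open Scope classical_set_scope.
Local Open Scope ring_scope.

Definition mutually_independent {d} {T : measurableType d} {R : realType}
  (P : probability T R) {I : eqType} (F : I -> T -> R) : Prop :=
  (forall i, measurable_fun setT (F i)) /\
  forall (s : seq I) (B : I -> set R), uniq s ->
    (forall i, i \in s -> measurable (B i)) ->
    P (\big[setI/setT]_(i <- s) (F i @^-1` B i)) =
    (\prod_(i <- s) P (F i @^-1` B i))%E.

Definition identically_distributed {d} {T : measurableType d} {R : realType}
  (P : probability T R) (F : nat -> T -> R) : Prop :=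
  forall n (B : set R), measurable B -> P (F n @^-1` B) = P (F 0 @^-1` B).

(* The three sequences collected into one family indexed by (n, k),
   k = 0 : premiums, k = 1 : claims, k = 2 : interest rates. *)
Definition family3 {T : Type} {R : Type} (X Y I : nat -> T -> R)
  (p : nat * 'I_3) : T -> R :=
  if val p.2 == 0%N then X p.1 else if val p.2 == 1%N then Y p.1 else I p.1.

(* Sequences below are indexed from 0: X k, Y k, I k stand for the paper's
   X_{k+1}, Y_{k+1}, I_{k+1}. *)

Fixpoint surplus {T : Type} {R : realType} (X Y I : nat -> T -> R) (u : R)
  (n : nat) (w : T) : R :=
  match n with
  | 0 => u
  | n'.+1 => (surplus X Y I u n' w + X n' w) * (1 + I n' w) - Y n' w
  end.

Definition ruin_prob {d} {T : measurableType d} {R : realType}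
  (P : probability T R) (X Y I : nat -> T -> R) (u : R) : \bar R :=
  P (\bigcup_(n in [set n : nat | (0 < n)%N]) [set w | surplus X Y I u n w < 0]).

Definition Ssum {T : Type} {R : realType} (X Y I : nat -> T -> R)
  (n : nat) (w : T) : R :=
  \sum_(i < n) ((Y i w / (1 + I i w) - X i w) *
                 \prod_(j < i) (1 + I j w)^-1).

Definition gen_sigma {T : Type} {R : realType} (Z : nat -> T -> R) (n : nat)
  : set (set T) :=
  <<s [set A | exists i (B : set R),
        [/\ (1 <= i <= n)%N, measurable B & A = Z i @^-1` B]] >>.

(* {Z_n, n >= 1} is a supermartingale w.r.t. its natural filtration:
   each Z_n is measurable and integrable, and
   E(Z_{n+1} | Z_1..Z_n) <= Z_n a.s., expressed through the defining
   property of conditional expectation: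
   for all A in sigma(Z_1..Z_n), E[Z_{n+1} 1_A] <= E[Z_n 1_A]. *)
Definition supermartingale {d} {T : measurableType d} {R : realType}
  (P : probability T R) (Z : nat -> T -> R) : Prop :=
  (forall n, (0 < n)%N ->
     measurable_fun setT (Z n) /\ P.-integrable setT (EFin \o Z n)) /\
  (forall n, (0 < n)%N -> forall A, gen_sigma Z n A ->
     (\int[P]_(w in A) (Z n.+1 w)%:E <= \int[P]_(w in A) (Z n w)%:E)%E).

(* Indices start at 0.  Put V_k = Y_k (1 + I_k)^-1 - X_k and
   c_k = prod_(j < k) (1 + I_j)^-1, so that S_(k+1) = S_k + c_k V_k and
   Z_(k+1) = Z_k exp (c_k r V_k).  The factor c_k lies in [0, 1] and is
   determined by the first k periods, while V_k is independent of them;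
   convexity of exp gives exp (c r V) <= 1 - c + c exp (r V), and
   E exp (r V_k) = E exp (r V_0) <= 1, whence E[Z_(k+1); A] <= E[Z_k; A] for
   every event A of the first k periods.  Since U_n = prod_(j < n) (1 + I_j)
   (u - S_n), ruin by time N means S_n > u for some 0 < n <= N.  Stopping Z at
   that time gives a process with expectation at most 1 which is at least
   exp (r u) on the ruin event, so P(ruin by time N) <= exp (- r u); let N tend
   to infinity.  Independence of the sigma-algebras of disjoint subfamilies
   follows from the mutual independence of the family by a pi-lambda argument
   on cylinders. *)

From HB Require Import structures.
From mathcomp Require Import all_boot all_order all_algebra.
From mathcomp Require Import all_classical all_reals all_analysis.
From mathcomp Require Import ring measurable_realfun.
Set Implicit Arguments. Unset Strict Implicit. Unset Printing Implicit Defensive.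
Import Order.TTheory GRing.Theory Num.Theory.
Local Open Scope classical_set_scope.
Local Open Scope ring_scope.

(** * Independence of disjoint subfamilies *)

Section independent_sets.
Context d (T : measurableType d) (R : realType) (P : probability T R).
Local Open Scope ereal_scope.

Definition indep_pair (f g : T -> R) := forall B1 B2 : set R,
  measurable B1 -> measurable B2 ->
  P (f @^-1` B1 `&` g @^-1` B2) = P (f @^-1` B1) * P (g @^-1` B2).

(* Events independent of a fixed event [C] form a lambda-system. *)
Lemma indep_event_sigma (G : set (set T)) (C : set T) : measurable C ->
  setI_closed G -> G `<=` measurable ->
  (forall A, G A -> P (C `&` A) = P C * P A) ->
  forall A, <<s G>> A -> P (C `&` A) = P C * P A.
Proof.
move=> mC GI Gm HG.
suff : <<s G>> `<=` [set A | measurable A /\ P (C `&` A) = P C * P A].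
  by move=> H A /H [].
apply: (lambda_system_subset GI) => //; last by move=> A GA; split; [exact: Gm|exact: HG].
split => //.
- by split => //; rewrite setIT probability_setT mule1.
- move=> A B BA [mA HA] [mB HB]; split; first exact: measurableD.
  have fin E : measurable E -> P E \is a fin_num by exact: fin_num_measure.
  have lty E : measurable E -> P E < +oo by move=> mE; rewrite ltey_eq fin.
  have mCA := measurableI _ _ mC mA.
  rewrite setIDA measureD ?lty // -setIA (setIidr BA).
  (* [measureD] is stated for the content underlying [P]: fold it back. *)
  rewrite -[_ (C `&` A)]/(P _) -[_ (C `&` B)]/(P _) HA HB.
  by rewrite measureD ?lty // (setIidr BA) muleBr ?fin // fin_num_adde_defr ?fin.
- move=> Fs ndF HFs; split; first by apply: bigcup_measurable => n _; case: (HFs n).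
  have mF n : measurable (Fs n) by case: (HFs n).
  rewrite setI_bigcupr.
  have nd_CF : nondecreasing_seq (fun n => C `&` Fs n).
    by move=> m n mn; apply/subsetPset; apply: setIS; apply/subsetPset; exact: ndF.
  have cvg_CF : (P \o (fun n => C `&` Fs n)) @ \oo --> P (\bigcup_n (C `&` Fs n)).
    apply: nondecreasing_cvg_mu => // [n|]; first exact: measurableI.
    by apply: bigcup_measurable => n _; exact: measurableI.
  have cvg_F : (fun n => P C * P (Fs n)) @ \oo --> P C * P (\bigcup_n Fs n).
    apply: cvgeZl; first exact: fin_num_measure.
    by apply: nondecreasing_cvg_mu => //; exact: bigcup_measurable.
  have E_CF : P \o (fun n => C `&` Fs n) = (fun n => P C * P (Fs n)).
    by apply/funext => n /=; case: (HFs n).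
  by rewrite E_CF in cvg_CF; exact: cvg_unique _ cvg_CF cvg_F.
Qed.

End independent_sets.

Section disjoint_subfamilies.
Context d (T : measurableType d) (R : realType) (P : probability T R).
Context (Ix : choiceType) (F : Ix -> T -> R).
Hypothesis indepF : mutually_independent P F.

Definition preimage_gens (J : pred Ix) : set (set T) :=
  [set A | exists i (B : set R), [/\ J i, measurable B & A = F i @^-1` B]].

Definition cylinders (J : pred Ix) : set (set T) :=
  [set A | exists (s : seq Ix) (B : Ix -> set R),
     [/\ all J s, uniq s, (forall i, measurable (B i)) &
         A = \big[setI/setT]_(i <- s) (F i @^-1` B i)]].

Local Notation sigmaT J := (g_sigma_algebraType (preimage_gens J)).

Lemma cylinders_setI_closed J : setI_closed (cylinders J).
Proof.
move=> _ _ [s1 [B1 [J1 u1 m1 ->]]] [s2 [B2 [J2 u2 m2 ->]]].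
pose B i := (if i \in s1 then B1 i else setT) `&` (if i \in s2 then B2 i else setT).
exists (undup (s1 ++ s2)), B; split.
- by rewrite all_undup all_cat J1 J2.
- exact: undup_uniq.
- by move=> i; apply: measurableI; case: ifP.
rewrite -!bigcap_seq; apply/seteqP; split => w /=.
  move=> [h1 h2] i /=; rewrite mem_undup mem_cat /B.
  by case: ifP => [/h1|_]; case: ifP => [/h2|_].
move=> h; split=> i /= i_s; have := h i; rewrite /= mem_undup mem_cat i_s ?orbT /B i_s;
  by move=> /(_ isT) [].
Qed.

Lemma preimage_gens_sub_cylinders J : preimage_gens J `<=` cylinders J.
Proof.
move=> _ [i [B [Ji mB ->]]].
exists [:: i], (fun j => if j == i then B else setT); split => //=.
- by rewrite Ji.
- by move=> j; case: ifP.
by rewrite big_seq1 eqxx.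
Qed.

Lemma cylinders_sub_sigma J : cylinders J `<=` <<s preimage_gens J>>.
Proof.
move=> _ [s [B [/allP Js _ mB ->]]]; rewrite big_seq.
apply: (@bigsetI_measurable _ (sigmaT J)) => i /Js Ji.
by apply: sub_sigma_algebra; exists i, (B i).
Qed.

Lemma sigma_preimage_gens_measurable J : <<s preimage_gens J>> `<=` measurable.
Proof.
apply: smallest_sub; first exact: sigma_algebra_measurable.
by move=> _ [i [B [_ mB ->]]]; rewrite -[X in measurable X]setTI; exact: indepF.1.
Qed.

Lemma measurable_fun_sigma_preimage_gens J (f : T -> R) :
  measurable_fun setT (f : sigmaT J -> R) -> measurable_fun setT f.
Proof.
move=> mf _ B mB; rewrite setTI; apply: (@sigma_preimage_gens_measurable J).
by have := mf measurableT B mB; rewrite setTI.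
Qed.

Section disjoint.
Variables J1 J2 : pred Ix.
Hypothesis J12 : forall i, J1 i -> J2 i -> False.
Local Open Scope ereal_scope.

Lemma cylinders_indep C1 C2 : cylinders J1 C1 -> cylinders J2 C2 ->
  P (C1 `&` C2) = P C1 * P C2.
Proof.
move=> [s1 [B1 [/allP Js1 u1 m1 ->]]] [s2 [B2 [/allP Js2 u2 m2 ->]]].
pose B i := if i \in s1 then B1 i else B2 i.
have mB i : measurable (B i) by rewrite /B; case: ifP.
have E1 : \big[setI/setT]_(i <- s1) (F i @^-1` B1 i) =
          \big[setI/setT]_(i <- s1) (F i @^-1` B i).
  by rewrite big_seq [RHS]big_seq; apply: eq_bigr => i i_s1; rewrite /B i_s1.
have E2 : \big[setI/setT]_(i <- s2) (F i @^-1` B2 i) =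
          \big[setI/setT]_(i <- s2) (F i @^-1` B i).
  rewrite big_seq [RHS]big_seq; apply: eq_bigr => i i_s2; rewrite /B.
  by case: ifP => // i_s1; case: (J12 (Js1 _ i_s1) (Js2 _ i_s2)).
have u12 : uniq (s1 ++ s2).
  rewrite cat_uniq u1 u2 andbT; apply/hasPn => i /Js2 J2i.
  by apply/negP => /Js1 J1i; case: (J12 J1i J2i).
rewrite E1 E2 -big_cat (indepF.2 _ _ u12 (fun i _ => mB i)) big_cat.
by rewrite (indepF.2 _ _ u1 (fun i _ => mB i)) (indepF.2 _ _ u2 (fun i _ => mB i)).
Qed.

Lemma sigma_preimage_gens_indep A1 A2 :
  <<s preimage_gens J1>> A1 -> <<s preimage_gens J2>> A2 ->
  P (A1 `&` A2) = P A1 * P A2.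
Proof.
have cyl_meas J : cylinders J `<=` measurable.
  by move=> A /cylinders_sub_sigma; exact: sigma_preimage_gens_measurable.
have sigma_cyl J : <<s preimage_gens J>> `<=` <<s cylinders J>>.
  exact: sub_sigma_algebra2 (@preimage_gens_sub_cylinders J).
have cyl_sigma C1 : cylinders J1 C1 -> forall A, <<s preimage_gens J2>> A ->
    P (C1 `&` A) = P C1 * P A.
  move=> C1cyl A /sigma_cyl; apply: indep_event_sigma.
  - exact: cyl_meas _ _ C1cyl.
  - exact: cylinders_setI_closed.
  - exact: cyl_meas.
  - by move=> C2 /(cylinders_indep C1cyl).
move=> A1sigma A2sigma; rewrite setIC muleC.
apply: indep_event_sigma (sigma_cyl _ _ A1sigma).
- exact: sigma_preimage_gens_measurable A2sigma.
- exact: cylinders_setI_closed.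
- exact: cyl_meas.
- by move=> C1 /cyl_sigma/(_ _ A2sigma); rewrite setIC muleC.
Qed.

Lemma indep_pair_sigma (f g : T -> R) :
  measurable_fun setT (f : sigmaT J1 -> R) ->
  measurable_fun setT (g : sigmaT J2 -> R) -> indep_pair P f g.
Proof.
move=> mf mg B1 B2 mB1 mB2; apply: sigma_preimage_gens_indep.
  by have := mf measurableT B1 mB1; rewrite setTI.
by have := mg measurableT B2 mB2; rewrite setTI.
Qed.

End disjoint.

End disjoint_subfamilies.

(** * Integrals of functions of independent pairs *)

Section indep_pair_integral.
Context d (T : measurableType d) (R : realType) (P : probability T R).
Local Open Scope ereal_scope.

Definition rv_of d' (T' : measurableType d') (f : T -> T')
  (mf : measurable_fun setT f) : {RV P >-> T'} :=
  HB.pack f (isMeasurableFun.Build _ _ _ _ f mf).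

Lemma ge0_integral_indep_pair (f g : {RV P >-> R}) (h : R * R -> \bar R) :
  indep_pair P f g -> measurable_fun setT h -> (forall z, 0 <= h z) ->
  \int[P]_w h (f w, g w) =
  \int[distribution P f]_x \int[distribution P g]_y h (x, y).
Proof.
move=> fg mh h0; rewrite -fubini_tonelli1 //.
have mfg : measurable_fun setT (fun w => (f w, g w)) by exact/measurable_fun_pair.
transitivity (\int[distribution P (rv_of mfg)]_z h z).
  by rewrite ge0_integral_distribution.
apply: eq_measure_integral => A mA _.
by apply/esym/product_measure_unique => // B1 B2 mB1 mB2; exact: fg.
Qed.

Lemma ge0_integral_indep_pair_law (f g f' g' : {RV P >-> R}) (h : R * R -> \bar R) :
  indep_pair P f g -> indep_pair P f' g' ->
  (forall A, measurable A -> P (f @^-1` A) = P (f' @^-1` A)) ->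
  (forall A, measurable A -> P (g @^-1` A) = P (g' @^-1` A)) ->
  measurable_fun setT h -> (forall z, 0 <= h z) ->
  \int[P]_w h (f w, g w) = \int[P]_w h (f' w, g' w).
Proof.
move=> fg fg' ff' gg' mh h0.
rewrite !ge0_integral_indep_pair //.
transitivity (\int[distribution P f]_x \int[distribution P g']_y h (x, y)).
  by apply: eq_integral => x _; apply: eq_measure_integral => A mA _; exact: gg'.
by apply: eq_measure_integral => A mA _; exact: ff'.
Qed.

Lemma indep_pair_comp_law (f g f' g' : {RV P >-> R}) (h : R * R -> R) :
  indep_pair P f g -> indep_pair P f' g' ->
  (forall A, measurable A -> P (f @^-1` A) = P (f' @^-1` A)) ->
  (forall A, measurable A -> P (g @^-1` A) = P (g' @^-1` A)) ->
  measurable_fun setT h -> forall A, measurable A ->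
  P ((fun w => h (f w, g w)) @^-1` A) = P ((fun w => h (f' w, g' w)) @^-1` A).
Proof.
move=> fg fg' ff' gg' mh A mA.
have lawE (u v : {RV P >-> R}) : P ((fun w => h (u w, v w)) @^-1` A) =
    \int[P]_w (\1_A (h (u w, v w)) : R)%:E.
  have muv : measurable_fun setT (fun w => h (u w, v w)).
    by apply: (measurableT_comp mh); exact/measurable_fun_pair.
  by rewrite -[X in P X]setIT -integral_indic // -[X in measurable X]setTI; exact: muv.
rewrite !lawE.
apply: (ge0_integral_indep_pair_law (h := fun z => (\1_A (h z) : R)%:E)) => //.
  by apply/measurable_EFinP; exact: measurableT_comp (measurable_indic mA) mh.
Qed.

Lemma ge0_integral_indep_mul (f g : T -> R) :
  measurable_fun setT f -> measurable_fun setT g -> indep_pair P f g ->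
  (forall w, 0 <= f w)%R -> (forall w, 0 <= g w)%R ->
  \int[P]_w (f w * g w)%:E = \int[P]_w (f w)%:E * \int[P]_w (g w)%:E.
Proof.
move=> mf mg fg f0 g0.
have mabs : measurable_fun setT (fun x : R => `|x|%R) by exact: normr_measurable.
have mabsE : measurable_fun setT (fun x : R => (`|x|%R)%:E) by exact/measurable_EFinP.
have lawE (u : T -> R) (mu : measurable_fun setT u) : (forall w, 0 <= u w)%R ->
    \int[P]_w (u w)%:E = \int[distribution P (rv_of mu)]_x (`|x|%R)%:E.
  move=> u0; rewrite ge0_integral_distribution //=.
  by apply: eq_integral => w _; rewrite /= ger0_norm.
pose h (z : R * R) := (`|z.1| * `|z.2|)%:E.
have mh : measurable_fun setT h.
  apply/measurable_EFinP/measurable_funM.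
    exact: measurableT_comp mabs measurable_fst.
  exact: measurableT_comp mabs measurable_snd.
transitivity (\int[P]_w h (rv_of mf w, rv_of mg w)).
  by apply: eq_integral => w _; rewrite /h /= !ger0_norm.
rewrite ge0_integral_indep_pair //; last by move=> z; rewrite lee_fin mulr_ge0.
rewrite (lawE _ mf f0) (lawE _ mg g0) -ge0_integralZr //=; last first.
  by apply: integral_ge0 => y _; rewrite lee_fin.
apply: eq_integral => x _; rewrite /h /=; under eq_integral do rewrite EFinM.
by rewrite ge0_integralZl_EFin.
Qed.

End indep_pair_integral.

Lemma expR_mix_le (R : realType) (c t : R) : 0 <= c <= 1 ->
  expR (c * t) <= 1 - c + c * expR t.
Proof.
case/andP=> c0 c1; have := @convex_expR R (Itv01 c0 c1) t 0.
by rewrite !convRE /= mulr0 addr0 expR0 mulr1 addrC.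
Qed.

Section independent_exponential_factor.
Context d (T : measurableType d) (R : realType) (P : probability T R).
Local Open Scope ereal_scope.

(* Convexity gives [g e^(c v) <= g (1 - c) + g c e^v]; the second term
   factorises by independence and [E e^v <= 1]. *)
Lemma ge0_integral_mul_expR_mix_le (g c v : T -> R) :
  measurable_fun setT g -> measurable_fun setT c -> measurable_fun setT v ->
  (forall w, 0 <= g w)%R -> (forall w, 0 <= c w <= 1)%R ->
  indep_pair P (fun w => g w * c w)%R (expR \o v) ->
  \int[P]_w (expR (v w))%:E <= 1 ->
  \int[P]_w (g w * expR (c w * v w))%:E <= \int[P]_w (g w)%:E.
Proof.
move=> mg mc mv g0 c01 gc_v Ev.
have c0 w : (0 <= c w)%R by case/andP: (c01 w).
have mexpv : measurable_fun setT (expR \o v) by exact: measurableT_comp.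
have m1c : measurable_fun setT (fun w => g w * (1 - c w))%R.
  by apply: measurable_funM => //; exact: measurable_funB.
have mgc : measurable_fun setT (g \* c)%R by exact: measurable_funM.
have g1c0 w : (0 <= g w * (1 - c w))%R.
  by rewrite mulr_ge0 // subr_ge0; case/andP: (c01 w).
have gc0 w : (0 <= (g \* c)%R w)%R by rewrite mulr_ge0.
apply: (@le_trans _ _ (\int[P]_w ((g w * (1 - c w))%:E +
                                    ((g \* c)%R w * (expR \o v) w)%:E))).
  apply: ge0_le_integral => //.
  - by move=> w _; rewrite lee_fin mulr_ge0 ?expR_ge0.
  - apply/measurable_EFinP/measurable_funM => //.
    exact: (measurableT_comp (@measurable_expR R) (measurable_funM mc mv)).
  - by apply: emeasurable_funD; apply/measurable_EFinP => //; exact: measurable_funM.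
  - move=> w _; rewrite -EFinD lee_fin /= -mulrA -mulrDr ler_wpM2l //.
    exact: expR_mix_le.
rewrite ge0_integralD //; last 4 first.
- by move=> w _; rewrite lee_fin.
- exact/measurable_EFinP.
- by move=> w _; rewrite lee_fin mulr_ge0 ?expR_ge0.
- by apply/measurable_EFinP/measurable_funM.
rewrite (ge0_integral_indep_mul mgc mexpv gc_v) //; last by move=> w; exact: expR_ge0.
have Egc0 : 0 <= \int[P]_w ((g \* c)%R w)%:E.
  by apply: integral_ge0 => w _; rewrite lee_fin.
have Ev_fin : \int[P]_w ((expR \o v) w)%:E \is a fin_num.
  rewrite ge0_fin_numE ?(le_lt_trans Ev) ?ltry //.
  by apply: integral_ge0 => w _; rewrite lee_fin expR_ge0.
rewrite [X in _ + X]muleC; apply: le_trans (leeD2l _ (gee_pMl Ev_fin Egc0 Ev)) _.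
rewrite -ge0_integralD //; last 4 first.
- by move=> w _; rewrite lee_fin.
- exact/measurable_EFinP.
- by move=> w _; rewrite lee_fin.
- exact/measurable_EFinP.
rewrite [leLHS](eq_integral (fun w => (g w)%:E)) // => w _.
by rewrite -EFinD /= -mulrDr subrK mulr1.
Qed.

End independent_exponential_factor.

(** * The risk model *)

Lemma integral_mkcond_indic d (T : measurableType d) (R : realType)
  (mu : {measure set T -> \bar R}) (A : set T) (f : T -> R) :
  (\int[mu]_(w in A) (f w)%:E = \int[mu]_w (\1_A w * f w)%:E)%E.
Proof.
rewrite integral_mkcond; apply: eq_integral => w _; rewrite patchE indicE.
by case: ifP => _; rewrite ?mul1r ?mul0r.
Qed.

(* [(1 + x)^-1] is not continuous at [x = -1], where it is [0] by convention;
   on the nonnegative rates of interest it agrees with this continuous map. *)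
Definition inv1p_norm {R : realType} (x : R) : R := (1 + `|x|)^-1.

Lemma measurable_inv1p_norm (R : realType) : measurable_fun setT (@inv1p_norm R).
Proof.
apply: continuous_measurable_fun => x; apply: cvgV; first by rewrite gt_eqF // ltr_wpDr.
by apply: cvgD; [exact: cvg_cst | exact: norm_continuous].
Qed.

Lemma inv1p_normE {R : realType} (x : R) : 0 <= x -> inv1p_norm x = (1 + x)^-1.
Proof. by move=> x0; rewrite /inv1p_norm ger0_norm. Qed.

Definition kX : 'I_3 := @Ordinal 3 0 isT.
Definition kY : 'I_3 := @Ordinal 3 1 isT.
Definition kI : 'I_3 := @Ordinal 3 2 isT.

Section risk_model.
Context d (T : measurableType d) (R : realType) (P : probability T R).
Variables (X Y I : nat -> {RV P >-> R}).
Hypothesis I_ge0 : forall n w, 0 <= I n w.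

Local Notation F := (family3 (fun n => X n : T -> R) (fun n => Y n : T -> R)
                             (fun n => I n : T -> R)).
Hypothesis indepF : mutually_independent P F.
Local Notation sigmaT J := (g_sigma_algebraType (preimage_gens F J)).

Lemma measurable_fun_sigma J (f : T -> R) :
  measurable_fun setT (f : sigmaT J -> R) -> measurable_fun setT f.
Proof. exact: (@measurable_fun_sigma_preimage_gens _ _ _ _ _ _ indepF J f). Qed.

Definition past (n : nat) (p : nat * 'I_3) := (p.1 < n)%N.
Definition at_time (n : nat) (p : nat * 'I_3) := p.1 == n.

Definition discount n w := \prod_(j < n) (1 + I j w)^-1.
Definition net_loss n w := Y n w / (1 + I n w) - X n w.
Definition S n w := Ssum (fun n => X n : T -> R) (fun n => Y n : T -> R)
                         (fun n => I n : T -> R) n w.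

Lemma S_recr n w : S n.+1 w = S n w + net_loss n w * discount n w.
Proof. by rewrite /S /Ssum big_ord_recr. Qed.

Lemma discount_ge0_le1 n w : 0 <= discount n w <= 1.
Proof.
have inv01 j : 0 <= (1 + I j w)^-1 <= 1.
  by rewrite invr_ge0 addr_ge0 //= invf_le1 ?lerDl // ltr_pwDl.
apply/andP; split; first by apply: prodr_ge0 => j _; case/andP: (inv01 j).
by apply: prodr_ile1 => j _; exact: inv01.
Qed.

Section measurability.
Variable J : pred (nat * 'I_3).

Lemma measurable_family3 p : J p -> measurable_fun setT (F p : sigmaT J -> R).
Proof. by move=> Jp _ B mB; rewrite setTI; apply: sub_sigma_algebra; exists p, B. Qed.

Lemma measurable_X i : J (i, kX) -> measurable_fun setT (X i : sigmaT J -> R).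
Proof. exact: measurable_family3. Qed.

Lemma measurable_Y i : J (i, kY) -> measurable_fun setT (Y i : sigmaT J -> R).
Proof. exact: measurable_family3. Qed.

Lemma measurable_I i : J (i, kI) -> measurable_fun setT (I i : sigmaT J -> R).
Proof. exact: measurable_family3. Qed.

Lemma measurable_inv1p_rate i : J (i, kI) ->
  measurable_fun setT ((fun w => (1 + I i w)^-1) : sigmaT J -> R).
Proof.
move=> Ji; have -> : (fun w => (1 + I i w)^-1) = inv1p_norm \o I i.
  by apply/funext => w; rewrite /= inv1p_normE.
exact: measurableT_comp (@measurable_inv1p_norm R) (measurable_I Ji).
Qed.

Lemma measurable_net_loss k : J (k, kX) -> J (k, kY) -> J (k, kI) ->
  measurable_fun setT (net_loss k : sigmaT J -> R).
Proof.
move=> JX JY JI; apply: measurable_funB; last exact: measurable_X.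
exact: measurable_funM (measurable_Y JY) (measurable_inv1p_rate JI).
Qed.

End measurability.

Lemma measurable_discount_past n j : (j <= n)%N ->
  measurable_fun setT (discount j : sigmaT (past n) -> R).
Proof.
move=> jn; apply: measurable_prod => i _; apply: measurable_inv1p_rate.
exact: leq_trans (ltn_ord i) jn.
Qed.

Lemma measurable_S_past n j : (j <= n)%N ->
  measurable_fun setT (S j : sigmaT (past n) -> R).
Proof.
move=> jn; rewrite /S /Ssum; apply: measurable_sum => i.
have i_n := leq_trans (ltn_ord i) jn.
apply: measurable_funM; first exact: measurable_net_loss.
exact: measurable_discount_past (ltnW i_n).
Qed.

Definition disc_claim k w := Y k w * inv1p_norm (I k w).

Lemma measurable_disc_claim (J : pred (nat * 'I_3)) k : J (k, kY) -> J (k, kI) ->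
  measurable_fun setT (disc_claim k : sigmaT J -> R).
Proof.
move=> JY JI; apply: measurable_funM; first exact: measurable_Y.
exact: measurableT_comp (@measurable_inv1p_norm R) (measurable_I JI).
Qed.

Definition claim_rate_at k (p : nat * 'I_3) := (p.2 != kX) && (p.1 == k).

Definition disc_claim_rv k : {RV P >-> R} :=
  rv_of P (measurable_fun_sigma
    (@measurable_disc_claim (claim_rate_at k) k (eqxx _) (eqxx _))).

Lemma indep_pair_claim_rate k : indep_pair P (Y k) (I k).
Proof.
apply: (@indep_pair_sigma _ _ _ _ _ _ indepF (pred1 (k, kY)) (pred1 (k, kI))).
- by move=> p /eqP -> /eqP [].
- by apply: measurable_Y; rewrite /= eqxx.
- by apply: measurable_I; rewrite /= eqxx.
Qed.

Lemma indep_pair_premium_disc_claim k : indep_pair P (X k) (disc_claim_rv k).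
Proof.
apply: (@indep_pair_sigma _ _ _ _ _ _ indepF (pred1 (k, kX)) (claim_rate_at k)).
- by move=> p /eqP -> /andP[].
- by apply: measurable_X; rewrite /= eqxx.
- by apply: (@measurable_disc_claim _ k); rewrite /claim_rate_at /= eqxx.
Qed.

Hypothesis idX : identically_distributed P (fun n => X n : T -> R).
Hypothesis idY : identically_distributed P (fun n => Y n : T -> R).
Hypothesis idI : identically_distributed P (fun n => I n : T -> R).

Lemma disc_claim_law k A : measurable A ->
  P (disc_claim_rv k @^-1` A) = P (disc_claim_rv 0%N @^-1` A).
Proof.
pose h (z : R * R) := z.1 * inv1p_norm z.2.
have mh : measurable_fun setT h.
  apply: measurable_funM; first exact: measurable_fst.
  exact: measurableT_comp (@measurable_inv1p_norm R) measurable_snd.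
exact: (indep_pair_comp_law (h := h) (indep_pair_claim_rate k)
  (indep_pair_claim_rate 0%N) (fun B mB => idY k mB) (fun B mB => idI k mB) mh).
Qed.

Variable r : R.
Hypothesis expR_net_loss0_le1 :
  ('E_P[fun w => expR (r * (Y 0%N w / (1 + I 0%N w) - X 0%N w))] <= 1)%E.

Lemma expR_net_loss_le1 k : (\int[P]_w (expR (r * net_loss k w))%:E <= 1)%E.
Proof.
pose h (z : R * R) := (expR (r * (z.2 - z.1)))%:E.
have mh : measurable_fun setT h.
  apply/measurable_EFinP; apply: measurableT_comp (@measurable_expR R) _.
  apply: measurable_funM; first exact: measurable_cst.
  by apply: measurable_funB; [exact: measurable_snd | exact: measurable_fst].
have netE j : (\int[P]_w (expR (r * net_loss j w))%:E =
               \int[P]_w h (X j w, disc_claim_rv j w))%E.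
  by apply: eq_integral => w _; rewrite /h /net_loss /= /disc_claim inv1p_normE.
rewrite netE (ge0_integral_indep_pair_law (indep_pair_premium_disc_claim k)
  (indep_pair_premium_disc_claim 0%N)).
- by move: expR_net_loss0_le1; rewrite unlock (netE 0%N).
- by move=> B mB; exact: idX.
- exact: disc_claim_law.
- exact: mh.
- by move=> z; rewrite lee_fin expR_ge0.
Qed.

Definition Z n w := expR (r * S n w).

Lemma Z_recr n w : Z n.+1 w = Z n w * expR (discount n w * (r * net_loss n w)).
Proof. by rewrite /Z S_recr mulrDr expRD [net_loss n w * _]mulrC mulrCA. Qed.

Lemma Z0 w : Z 0%N w = 1.
Proof. by rewrite /Z /S /Ssum big_ord0 mulr0 expR0. Qed.

Lemma measurable_Z_past n j : (j <= n)%N ->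
  measurable_fun setT (Z j : sigmaT (past n) -> R).
Proof.
move=> jn; apply: measurableT_comp (@measurable_expR R) _.
exact: measurable_funM (measurable_cst r) (measurable_S_past jn).
Qed.

Lemma measurable_Z n : measurable_fun setT (Z n).
Proof. exact: measurable_fun_sigma (measurable_Z_past (leqnn n)). Qed.

Lemma integral_Z_succ_le k A : <<s preimage_gens F (past k)>> A ->
  (\int[P]_(w in A) (Z k.+1 w)%:E <= \int[P]_(w in A) (Z k w)%:E)%E.
Proof.
move=> pastA; rewrite 2!(integral_mkcond_indic _ A).
under eq_integral do rewrite Z_recr mulrA.
have mA : measurable_fun setT (\1_A : sigmaT (past k) -> R) by exact: measurable_indic.
have mAZ := measurable_funM mA (measurable_Z_past (leqnn k)).
have mc := measurable_discount_past (leqnn k).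
have mv : measurable_fun setT ((fun w => r * net_loss k w) : sigmaT (at_time k) -> R).
  by apply: measurable_funM => //; apply: measurable_net_loss; rewrite /at_time eqxx.
apply: (ge0_integral_mul_expR_mix_le (g := fun w => \1_A w * Z k w)
  (c := discount k) (v := fun w => r * net_loss k w)).
- exact: measurable_fun_sigma mAZ.
- exact: measurable_fun_sigma mc.
- exact: measurable_fun_sigma mv.
- by move=> w; rewrite mulr_ge0 ?expR_ge0.
- exact: discount_ge0_le1.
- apply: (@indep_pair_sigma _ _ _ _ _ _ indepF (past k) (at_time k)).
  + by move=> [i k']; rewrite /past /at_time /= => /[swap] /eqP ->; rewrite ltnn.
  + exact: measurable_funM mAZ mc.
  + exact: measurableT_comp (@measurable_expR R) mv.
- exact: expR_net_loss_le1.
Qed.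

Lemma integral_Z_le1 n : (\int[P]_w (Z n w)%:E <= 1)%E.
Proof.
elim: n => [|n IHn]; last first.
  apply: le_trans IHn; exact: integral_Z_succ_le (@measurableT _ (sigmaT (past n))).
under eq_integral do rewrite Z0.
by rewrite integral_cst // mul1e probability_le1.
Qed.

Lemma supermartingale_Z : supermartingale P Z.
Proof.
split=> [n _|n _]; last first.
  move=> A genA; apply: integral_Z_succ_le; move: A genA; apply: smallest_sub.
    exact: (@sigma_algebra_measurable _ (sigmaT (past n))).
  move=> _ [i [B [/andP[_ iN] mB ->]]].
  by have := measurable_Z_past iN measurableT mB; rewrite setTI.
split; first exact: measurable_Z.
apply/integrableP; split; first exact/measurable_EFinP/measurable_Z.
under eq_integral do rewrite /= ger0_norm ?expR_ge0//.
exact: le_lt_trans (integral_Z_le1 n) (ltry _).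
Qed.

Variable u : R.

Definition ruined_by N := \bigcup_(j in [set j | (j < N)%N]) [set w | u < S j.+1 w].

(* [Z_stopped N] is [Z] stopped at the first time [S] exceeds [u], seen at time [N]. *)
Fixpoint Z_stopped N w := match N with
  | 0 => 1
  | N'.+1 => if w \in ruined_by N' then Z_stopped N' w else Z N'.+1 w
  end.

Lemma sigma_past_ruined_by N : <<s preimage_gens F (past N)>> (ruined_by N).
Proof.
apply: (@bigcup_measurable _ (sigmaT (past N))) => j /= jN.
have := measurable_fun_ltr (measurable_cst u) (measurable_S_past jN).
by move=> /(_ measurableT [set true]); rewrite setTI; apply.
Qed.

Lemma measurable_ruined_by N : measurable (ruined_by N).
Proof.
exact: (@sigma_preimage_gens_measurable _ _ _ _ _ _ indepF (past N) _
  (@sigma_past_ruined_by N)).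
Qed.

Lemma Z_stopped_ge0 N w : 0 <= Z_stopped N w.
Proof. by elim: N => [|N IHN] //=; case: ifP => _ //; exact: expR_ge0. Qed.

Lemma Z_stopped_notin N w : w \notin ruined_by N -> Z_stopped N w = Z N w.
Proof.
case: N => [|N] /=; first by rewrite Z0.
move=> wN; suff -> : (w \in ruined_by N) = false by [].
apply/negbTE; apply: contra wN; rewrite !inE => -[j /= jN Sj].
by exists j => //=; exact: ltnW.
Qed.

Hypothesis r_gt0 : 0 < r.

Lemma Z_stopped_ge_ruined N w : w \in ruined_by N -> expR (r * u) <= Z_stopped N w.
Proof.
elim: N => [|N IHN] /=; first by rewrite inE => -[j].
case: ifPn => [/IHN //|wN].
rewrite inE => -[j /= jN Sj]; have jE : j = N.
  apply/eqP; rewrite eqn_leq -ltnS jN leqNgt; apply/negP => jN'.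
  by move/negP: wN; apply; rewrite inE; exists j.
by rewrite -jE /Z ler_expR ler_pM2l // ltW.
Qed.

Lemma measurable_Z_stopped N : measurable_fun setT (Z_stopped N).
Proof.
elim: N => [|N IHN] /=; first exact: measurable_cst.
have -> : (fun w => if w \in ruined_by N then Z_stopped N w else Z N.+1 w) =
  (fun w => \1_(ruined_by N) w * Z_stopped N w + (1 - \1_(ruined_by N) w) * Z N.+1 w).
  apply/funext => w; rewrite indicE; case: ifP => _.
    by rewrite mul1r subrr mul0r addr0.
  by rewrite mul0r subr0 mul1r add0r.
have mi : measurable_fun setT (\1_(ruined_by N) : T -> R).
  exact: measurable_indic (measurable_ruined_by N).
apply: measurable_funD; first exact: measurable_funM.
by apply: measurable_funM (measurable_Z _); exact: measurable_funB.
Qed.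

Lemma integral_Z_stopped_le1 N : (\int[P]_w (Z_stopped N w)%:E <= 1)%E.
Proof.
elim: N => [|N IHN] /=; first by rewrite integral_cst // mul1e probability_le1.
apply: le_trans IHN.
have mH := measurable_ruined_by N.
have splitE (g : T -> R) : measurable_fun setT g -> (forall w, 0 <= g w) ->
    (\int[P]_w (g w)%:E =
     \int[P]_(w in ruined_by N) (g w)%:E + \int[P]_(w in ~` ruined_by N) (g w)%:E)%E.
  move=> mg g0; rewrite -ge0_integral_setU ?setUv //; last by rewrite disj_set2E setICr.
  - exact: measurableC.
  - by apply: measurable_funTS; exact/measurable_EFinP.
  - by move=> w _; rewrite lee_fin.
rewrite (splitE _ (measurable_Z_stopped N.+1) (Z_stopped_ge0 N.+1)).
rewrite (splitE _ (measurable_Z_stopped N) (Z_stopped_ge0 N)).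
apply: leeD.
  by rewrite [leLHS](eq_integral (fun w => (Z_stopped N w)%:E)) // => w /= ->.
rewrite (eq_integral (fun w => (Z N.+1 w)%:E)); last first.
  by move=> w; rewrite in_setC => /= /negbTE ->.
rewrite [leRHS](eq_integral (fun w => (Z N w)%:E)) => [|w]; last first.
  by rewrite in_setC => wN; rewrite Z_stopped_notin.
exact: integral_Z_succ_le (@measurableC _ (sigmaT (past N)) _ (@sigma_past_ruined_by N)).
Qed.

Lemma prob_ruined_by_le N : (P (ruined_by N) <= (expR (- (r * u)))%:E)%E.
Proof.
have mH := measurable_ruined_by N.
suff : ((expR (r * u))%:E * P (ruined_by N) <= 1)%E.
  rewrite -(fineK (fin_num_measure P _ mH)) -EFinM !lee_fin expRN => Hle.
  by rewrite -(ler_pM2l (expR_gt0 (r * u))) mulfV ?gt_eqF ?expR_gt0.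
rewrite -[ruined_by N]setIT -integral_indic // -ge0_integralZl_EFin //; last first.
  exact/measurable_EFinP/measurable_indic.
apply: le_trans (integral_Z_stopped_le1 N).
under eq_integral do rewrite -EFinM.
apply: ge0_le_integral => //.
- by apply/measurable_EFinP/measurable_funM => //; exact: measurable_indic.
- exact/measurable_EFinP/measurable_Z_stopped.
move=> w _; rewrite lee_fin indicE; have [wH|wH] := boolP (w \in ruined_by N).
  by rewrite mulr1; exact: Z_stopped_ge_ruined.
by rewrite mulr0; exact: Z_stopped_ge0.
Qed.

Local Notation U := (surplus (fun n => X n : T -> R) (fun n => Y n : T -> R)
                             (fun n => I n : T -> R) u).

Lemma surplusE n w : U n w = (\prod_(j < n) (1 + I j w)) * (u - S n w).
Proof.
elim: n => [|n IHn] /=; first by rewrite big_ord0 /S /Ssum big_ord0 subr0 mul1r.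
have In0 : 1 + I n w != 0 by rewrite gt_eqF // ltr_pwDl.
have prod_gt0 : 0 < \prod_(j < n) (1 + I j w).
  by apply: prodr_gt0 => j _; rewrite ltr_pwDl.
rewrite IHn S_recr big_ord_recr /= /net_loss /discount prodfV.
by field; rewrite In0 gt_eqF.
Qed.

Lemma ruin_eventE : \bigcup_(n in [set n : nat | (0 < n)%N]) [set w | U n w < 0] =
  \bigcup_N ruined_by N.
Proof.
have U_lt0 n w : (U n w < 0) = (u < S n w).
  rewrite surplusE pmulr_rlt0 ?subr_lt0 //.
  by apply: prodr_gt0 => j _; rewrite ltr_pwDl.
apply/seteqP; split => w /=.
  move=> [n /= n0]; rewrite U_lt0 => Sn.
  by exists n => //; exists n.-1; rewrite /= prednK.
by move=> [N _ [j /= jN]]; rewrite -U_lt0; exists j.+1.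
Qed.

Lemma ruin_prob_le : (ruin_prob P (fun n => X n : T -> R) (fun n => Y n : T -> R)
                       (fun n => I n : T -> R) u <= (expR (- (r * u)))%:E)%E.
Proof.
rewrite /ruin_prob ruin_eventE.
have ndH : nondecreasing_seq ruined_by.
  move=> m n mn; apply/subsetPset => w [j /= jm Sj].
  by exists j => //=; exact: leq_trans jm mn.
have mU : measurable (\bigcup_N ruined_by N).
  by apply: bigcup_measurable => N _; exact: measurable_ruined_by.
have cvg_H := nondecreasing_cvg_mu (mu := P) measurable_ruined_by mU ndH.
rewrite -(cvg_lim _ cvg_H) //; apply: lime_le.
  by apply/cvg_ex; eexists; exact: cvg_H.
by apply: nearW => N; exact: prob_ruined_by_le.
Qed.

End risk_model.

Theorem lemma2p4 (d : measure_display) (T : measurableType d) (R : realType)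
  (P : probability T R) (X Y I : nat -> {RV P >-> R}) (r : R) :
  (forall n w, 0 <= X n w) -> (forall n w, 0 <= Y n w) ->
  (forall n w, 0 <= I n w) ->
  (forall n, P.-integrable setT (EFin \o X n)) ->
  (forall n, P.-integrable setT (EFin \o Y n)) ->
  (forall n, P.-integrable setT (EFin \o I n)) ->
  mutually_independent P (family3 (fun n => X n : T -> R)
                                  (fun n => Y n : T -> R)
                                  (fun n => I n : T -> R)) ->
  identically_distributed P (fun n => X n : T -> R) ->
  identically_distributed P (fun n => Y n : T -> R) ->
  identically_distributed P (fun n => I n : T -> R) ->
  0 < r ->
  ('E_P[fun w => expR (r * (Y 0%N w / (1 + I 0%N w) - X 0%N w))] <= 1)%E ->
  supermartingale P (fun n w => expR (r * Ssum (fun n => X n : T -> R)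
                                    (fun n => Y n : T -> R)
                                    (fun n => I n : T -> R) n w)) /\
  (forall u : R, 0 < u ->
     (ruin_prob P (fun n => X n : T -> R) (fun n => Y n : T -> R)
                  (fun n => I n : T -> R) u <= (expR (- (r * u)))%:E)%E).
Proof.
move=> _ _ I_ge0 _ _ _ indepF idX idY idI r_gt0 E_le1; split.
  exact (supermartingale_Z I_ge0 indepF idX idY idI E_le1).
by move=> u _; exact (ruin_prob_le I_ge0 indepF idX idY idI E_le1 u r_gt0).
Qed.
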